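(* Let $X$ be a discretely geodesic metric space with $\beta$-stable intervals in which all bounded subsets are finite. Fix $z\in X$ and $\alpha>0$, and let $B$ be the closed ball $B(z,2\alpha\beta)$. Then $|\mathscr C(B)|<\infty$, and (1) every $f\in\mathrm E'(X)$ with $f(z)\le\alpha$ satisfies $\mathrm{rk}(A(f))\le\frac12|\mathscr C(B)|$; (2) for every $f\in\mathrm E'(X)$ with $f(z)\le\alpha$ and $\mathrm{rk}(A(f))=0$ there are at most $2^{|\mathscr C(B)|}$ sets $A\in\mathscr A(X)$ with $A\subset A(f)$ and $\mathrm{rk}(A)=1$.
   Context: $X$ is discretely geodesic if $d$ is integer valued and any $x,y$ are joined by an isometric embedding $\gamma\colon\{0,\dots,d(x,y)\}\to X$ with endpoints $x,y$. $I(x,y)=\{u: d(x,u)+d(u,y)=d(x,y)\}$; $C(x,v)=\{y: v\in I(x,y)\}$; $\beta$-stable intervals: Hausdorff distance of $I(x,y)$ and $I(x,y')$ at most $\beta$ whenever $d(y,y')=1$. $\mathscr C(B)$ is the set of all pointed cones $(v,C(x,v))$ with $v\in B$, $x\in X$. For $f\colon X\to\mathbb R$, $A(f)$ is the set of unordered pairs $\{x,y\}$ ($x=y$ allowed) with $f(x)+f(y)=d(x,y)$; $\Delta(X)=\{f: f(x)+f(y)\ge d(x,y)\ \forall x,y\}$; $\mathrm E'(X)=\{f\in\Delta(X):\bigcup A(f)=X\}$; $\mathscr A(X)=\{A(f): f\in\mathrm E'(X)\}$; $\mathrm{rk}(A)=\dim\{g\in\mathbb R^X: g(x)+g(y)=d(x,y)\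 \forall\{x,y\}\in A\}$. *)

From HB Require Import structures.
From mathcomp Require Import all_boot all_order all_algebra.
From mathcomp Require Import all_classical all_reals.
Set Implicit Arguments. Unset Strict Implicit. Unset Printing Implicit Defensive.
Import Order.TTheory GRing.Theory Num.Theory.
Local Open Scope classical_set_scope.
Local Open Scope ring_scope.

Definition is_int_metric (X : Type) (d : X -> X -> nat) : Prop :=
  (forall x y, d x y = 0%N <-> x = y) /\
  (forall x y, d x y = d y x) /\
  (forall x y z, (d x z <= d x y + d y z)%N).

Definition discretely_geodesic (X : Type) (d : X -> X -> nat) : Prop :=
  forall x y, exists g : nat -> X,
    g 0%N = x /\ g (d x y) = y /\
    forall i j, (i <= d x y)%N -> (j <= d x y)%N ->
      d (g i) (g j) = `|(i%:Z - j%:Z)|%N.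

Definition bounded_finite (X : Type) (d : X -> X -> nat) : Prop :=
  forall (A : set X), (exists z r, forall x, A x -> (d z x <= r)%N) -> finite_set A.

Definition interval (X : Type) (d : X -> X -> nat) (x y : X) : set X :=
  [set u | (d x u + d u y)%N = d x y].

Definition cone (X : Type) (d : X -> X -> nat) (x v : X) : set X :=
  [set y | interval d x y v].

Definition hausdorff_le (X : Type) (R : realType) (d : X -> X -> nat)
  (A B : set X) (b : R) : Prop :=
  (forall u, A u -> exists u', B u' /\ (d u u')%:R <= b) /\
  (forall u', B u' -> exists u, A u /\ (d u u')%:R <= b).

Definition stable_intervals (X : Type) (R : realType) (d : X -> X -> nat) (b : R) : Prop :=
  forall x y y', d y y' = 1%N -> hausdorff_le d (interval d x y) (interval d x y') b.

Definition cball (X : Type) (R : realType) (d : X -> X -> nat) (z : X) (r : R) : set X :=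
  [set x | (d z x)%:R <= r].

Definition pointed_cones (X : Type) (d : X -> X -> nat) (B : set X) : set (X * set X) :=
  [set p | exists v x, B v /\ p = (v, cone d x v)].

(* A(f), represented as the (symmetric) set of ordered pairs (x,y)
   with f x + f y = d x y; the unordered pair {x,y} belongs to A(f)
   iff (x,y) (equivalently (y,x)) belongs to this set. *)
Definition Aset (X : Type) (R : realType) (d : X -> X -> nat) (f : X -> R) : set (X * X) :=
  [set p | f p.1 + f p.2 = (d p.1 p.2)%:R].

Definition Delta (X : Type) (R : realType) (d : X -> X -> nat) : set (X -> R) :=
  [set f | forall x y, (d x y)%:R <= f x + f y].

Definition Eprime (X : Type) (R : realType) (d : X -> X -> nat) : set (X -> R) :=
  [set f | Delta d f /\ forall x, exists y, Aset d f (x, y)].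

Definition scriptA (X : Type) (R : realType) (d : X -> X -> nat) : set (set (X * X)) :=
  [set A | exists f, @Eprime X R d f /\ A = Aset d f].

Definition solset (X : Type) (R : realType) (d : X -> X -> nat) (A : set (X * X)) : set (X -> R) :=
  [set g | forall p, A p -> g p.1 + g p.2 = (d p.1 p.2)%:R].

Definition lin_indep (X : Type) (R : realType) (n : nat) (h : 'I_n -> X -> R) : Prop :=
  forall c : 'I_n -> R, (forall x, \sum_(i < n) c i * h i x = 0) -> forall i, c i = 0.

Definition affdim_ge (X : Type) (R : realType) (S : set (X -> R)) (n : nat) : Prop :=
  exists (g0 : X -> R) (g : 'I_n -> X -> R),
    S g0 /\ (forall i, S (g i)) /\ lin_indep (fun i x => g i x - g0 x).

Definition rk_ge (X : Type) (R : realType) (d : X -> X -> nat) (A : set (X * X)) (n : nat) : Prop :=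
  affdim_ge (@solset X R d A) n.

Definition rk_eq (X : Type) (R : realType) (d : X -> X -> nat) (A : set (X * X)) (n : nat) : Prop :=
  @rk_ge X R d A n /\ ~ @rk_ge X R d A n.+1.

From Pilot Require Import Defs.
From HB Require Import structures.
From mathcomp Require Import all_boot all_order all_algebra.
From mathcomp Require Import all_classical all_reals.
From mathcomp Require Import finmap.
From mathcomp Require Import zify ring lra.
Import Order.TTheory GRing.Theory Num.Theory.
Set Implicit Arguments. Unset Strict Implicit. Unset Printing Implicit Defensive.
Local Open Scope classical_set_scope.
Local Open Scope ring_scope.
Local Notation itv := Pilot.Defs.interval.

(* Every [x] has a partner [y] with [{x,y}] in [A(f)], and stability of intervals
   yields a point [v] of [I(x,y)] in [B], because the defect
   [d(x,z) + d(z,y) - d(x,y)] is at most [2 f(z)].  Two points with the same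
   pointed cone [(v, C(x,v))] can exchange partners inside [A(f)].  Hence every
   solution of the homogeneous system of [A(f)] factors through the finite set
   [C(B)] and changes sign under the partner involution, so the rank is at most
   [|C(B)|/2].  If [A(f)] is rigid and [A = A(g)] inside it has rank one, then
   [g - f] takes the values [0, c, -c] and [A] is determined by [K = {g < f}],
   which is in turn determined by the pointed cones of the points of [K]; this
   gives at most [2^|C(B)|] such [A].  Cones are finite in number because
   [C(x,v)] only depends on the distances from [x] to the [beta]-ball around [v].
   For [beta < 0] the space is a single point. *)

Lemma exists_nat_ge (R : realType) (r : R) : exists M : nat, r <= M%:R.
Proof.
exists (Num.Def.archi_bound `|r|).
by apply: le_trans (ler_norm r) (ltW (archi_boundP (normr_ge0 r))).
Qed.

Lemma finite_set_subsets (T : Type) (A : set T) :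
  finite_set A -> finite_set [set S : set T | S `<=` A].
Proof.
elim/Pchoice: T => T in A *; move=> /finite_fsetP[F ->].
apply: (@sub_finite_set _ _ ((fun G : {fset T} => [set` G]) @` [set` fpowerset F])).
  move=> S /= hS.
  have /finite_fsetP[G hG] : finite_set S by apply: sub_finite_set hS (finite_fset F).
  exists G => //=; rewrite fpowersetE; apply/fsubsetP => t tG.
  by have := hS t; rewrite hG /=; apply.
exact/finite_image/finite_fset.
Qed.

Lemma finite_range_factor (T U V : Type) (f : T -> U) (g : T -> V) :
  (forall x y, g x = g y -> f x = f y) -> finite_set (range g) -> finite_set (range f).
Proof.
move=> fg fin_g; have [[x0]|T0] := pselect (inhabited T); last first.
  suff -> : range f = set0 by exact: finite_set0.
  by apply/seteqP; split=> // y [x _ _]; apply: T0 (inhabits x).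
pose pick w := if pselect (exists x, g x = w) is left e then projT1 (cid e) else x0.
apply: sub_finite_set (finite_image (f \o pick) fin_g).
move=> _ [x _ <-]; exists (g x); first by exists x.
rewrite /pick /=; case: pselect => [e|]; last by case; exists x.
by case: (cid e) => y /= /fg.
Qed.

Lemma lin_indep_leq (R : realType) (n N : nat) (W : 'I_n -> 'I_N -> R) :
  lin_indep W -> (n <= N)%N.
Proof.
move=> hW; pose M : 'M[R]_(n, N) := \matrix_(i, c) W i c.
suff : row_free M by rewrite -row_leq_rank => /leq_trans; apply; exact: rank_leq_col.
apply: inj_row_free => a ha; apply/rowP => i; rewrite mxE.
apply: (hW (fun i => a 0 i)) => c.
transitivity ((a *m M) 0 c); last by rewrite ha mxE.
by rewrite mxE; apply: eq_bigr => j _; rewrite mxE.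
Qed.

(* Twisting every row by the sign [s] of the first nonzero entry of each
   column doubles the independent family: [s] is odd on antipodal columns. *)
Lemma lin_indep_antipodal_leq (R : realType) (k N : nat) (U : 'I_k -> 'I_N -> R) :
  (forall c, (forall i, U i c = 0) \/ exists c', forall i, U i c' = - U i c) ->
  lin_indep U -> (k + k <= N)%N.
Proof.
move=> hcol hU.
pose s c := if [pick j | U j c != 0] is Some j then Num.sg (U j c) else 1.
pose W (i : 'I_(k + k)) c :=
  match fintype.split i with inl j => U j c | inr j => s c * U j c end.
apply: (@lin_indep_leq R _ _ W) => a ha.
pose A c := \sum_i a (lshift k i) * U i c.
pose B c := \sum_i a (rshift k i) * U i c.
have hAB c : A c + s c * B c = 0.
  rewrite -(ha c) big_split_ord mulr_sumr /W; congr (_ + _); apply: eq_bigr => i _.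
    by rewrite (unsplitK (inl i)).
  by rewrite (unsplitK (inr i)) mulrCA.
have hAB0 c : A c = 0 /\ B c = 0.
  have [zero|[c' anti]] := hcol c.
    by rewrite /A /B; split; apply: big1 => i _; rewrite zero mulr0.
  have eA : A c' = - A c by rewrite /A -sumrN; apply: eq_bigr => i _; rewrite anti mulrN.
  have eB : B c' = - B c by rewrite /B -sumrN; apply: eq_bigr => i _; rewrite anti mulrN.
  have hp : [pick j | U j c' != 0] = [pick j | U j c != 0].
    by apply: eq_pick => j /=; rewrite anti oppr_eq0.
  move: (hAB c') (hAB c); rewrite eA eB /s hp.
  case: pickP => [j hj|hn].
    rewrite anti sgrN => e1 e2.
    have /eqP : Num.sg (U j c) * B c = 0 by lra.
    by rewrite mulf_eq0 sgr_eq0 (negbTE hj) /= => /eqP hB; rewrite hB mulr0 addr0 in e2.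
  have zero i : U i c = 0 by apply/eqP; apply: negbFE (hn i).
  by rewrite /A /B; split; apply: big1 => i _; rewrite zero mulr0.
move=> i; rewrite -(splitK i); case: (fintype.split i) => j /=.
  by apply: (hU (fun j => a (lshift k j))) => c; have [] := hAB0 c.
by apply: (hU (fun j => a (rshift k j))) => c; have [] := hAB0 c.
Qed.

Lemma leq_exp2_injective_subsets (T : Type) (P : set T) (N n : nat) (S : 'I_n -> set T) :
  (P #= `I_N)%card -> (forall i, S i `<=` P) -> injective S -> (n <= 2 ^ N)%N.
Proof.
move=> hN hSP hS; have [enc [hfun hinj _]] := card_set_bijP hN.
pose code i : {set 'I_N} := finset (fun c : 'I_N => `[< exists2 p, S i p & enc p = c >]).
suff /leq_card : injective code.
  by rewrite card_ord -cardsT -powersetT card_powerset cardsT card_ord.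
suff sub i j : code i = code j -> S i `<=` S j.
  by move=> i j hij; apply: hS; apply/seteqP; split; apply: sub.
move=> hij p hp; have hlt : (enc p < N)%N by apply: hfun (hSP _ _ hp).
have : Ordinal hlt \in code j by rewrite -hij inE; apply/asboolP; exists p.
rewrite inE => /asboolP [p' hp' /(hinj _ _ (mem_set (hSP _ _ hp')) (mem_set (hSP _ _ hp)))].
by move=> <-.
Qed.

Lemma not_affdim_ge2_dependent (X : Type) (R : realType) (S : set (X -> R)) g0 g1 g2 :
  ~ affdim_ge S 2 -> S g0 -> S g1 -> S g2 ->
  exists a b : R, (a != 0 \/ b != 0) /\ forall x, a * (g1 x - g0 x) + b * (g2 x - g0 x) = 0.
Proof.
move=> S2 hg0 hg1 hg2; apply: contrapT => indep; apply: S2.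
exists g0, (fun i : 'I_2 => if val i == 0%N then g1 else g2).
split=> //; split=> [i|c hc i]; first by case: ifP.
apply: contrapT => ci; apply: indep; exists (c ord0), (c (lift ord0 ord0)); split.
  by case: i ci => -[|[|//]] ? ci; [left|right]; apply/eqP => h; apply: ci;
    rewrite -h; congr c; apply: val_inj.
by move=> x; rewrite -[RHS](hc x) big_ord_recl big_ord1.
Qed.

Section Cones.
Variables (X : Type) (d : X -> X -> nat).
Hypothesis hm : is_int_metric d.

Lemma dist_xx x : d x x = 0%N.
Proof. by case: hm => h _; apply/h. Qed.

Lemma dist_eq0 x y : d x y = 0%N -> x = y.
Proof. by case: hm => h _ /h. Qed.

Lemma distC x y : d x y = d y x.
Proof. by case: hm => _ []. Qed.

Lemma dist_triangle x y z : (d x z <= d x y + d y z)%N.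
Proof. by case: hm => _ []. Qed.

Lemma interval_sub x y y1 : itv d x y y1 -> itv d x y1 `<=` itv d x y.
Proof.
move=> hy1 v hv; rewrite /Defs.interval /= in hy1 hv *.
have := dist_triangle x v y; have := dist_triangle v y1 y; lia.
Qed.

Lemma finite_cball (R : realType) (z : X) (r : R) :
  bounded_finite d -> finite_set (cball d z r).
Proof.
move=> hfin; have [M hM] := exists_nat_ge r.
by apply: hfin; exists z, M => x hx; rewrite -(ler_nat R); apply: le_trans hx hM.
Qed.

Hypothesis hg : discretely_geodesic d.

Lemma geodesic_step z y m : d z y = m.+1 -> exists y1, d z y1 = m /\ d y1 y = 1%N.
Proof.
move=> hzy; have [g [g0 [gy gd]]] := hg z y.
exists (g m); split; first by rewrite -{1}g0 gd ?hzy // dist0n.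
by rewrite -gy hzy gd ?hzy // distnS.
Qed.

Variables (R : realType) (beta : R).
Hypothesis hs : stable_intervals d beta.
Arguments hs : clear implicits.

Lemma stable_intervals_neg_singleton : beta < 0 -> forall z x : X, x = z.
Proof.
move=> hb z x; case E: (d z x) => [|m]; first exact/esym/dist_eq0.
have [y1 [_ h1]] := geodesic_step E.
have hy1 : itv d y1 y1 y1 by rewrite /Defs.interval /= dist_xx.
have [u [_ hu]] := (hs y1 y1 x h1).1 y1 hy1.
by exfalso; have : (0 : R) <= (d y1 u)%:R by []; lra.
Qed.

(* Induction on [d z y]: moving [y] one step away from [z] either keeps the
   point (when [d x y] grows) or moves it by at most [beta] (stability) while the
   defect grows by at least one. *)
Lemma interval_near_center (z x y : X) : 0 <= beta ->
  exists v, itv d x y v /\ (d z v)%:R <= beta * (d x z + d z y - d x y)%N%:R.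
Proof.
move=> hb; move hn: (d z y) => n; elim: n y hn => [|n IH] y hy.
  have <- := dist_eq0 hy; exists z; split; first by rewrite /Defs.interval /= dist_xx addn0.
  by rewrite dist_xx mulr_ge0.
have [y1 [hzy1 hy1y]] := geodesic_step hy.
have [v1 [hv1 hb1]] := IH y1 hzy1.
have := dist_triangle x y1 y; have := dist_triangle x y y1.
have := dist_triangle x z y1; have := dist_triangle x z y; have := distC y y1.
case: (eqVneq (d x y1 + 1)%N (d x y)) => heq t1 t2 t3 t4 t5.
  exists v1; split.
    by apply: (interval_sub (y1 := y1) _ hv1); rewrite /Defs.interval /= hy1y.
  by apply: le_trans hb1 _; rewrite ler_wpM2l // ler_nat; lia.
have [v [hv hvv]] := (hs x y1 y hy1y).1 v1 hv1.
exists v; split => //.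
apply: (@le_trans _ _ ((d z v1)%:R + (d v1 v)%:R)).
  by rewrite -natrD ler_nat dist_triangle.
apply: (@le_trans _ _ (beta * (d x z + n - d x y1)%N%:R + beta)); first exact: lerD.
by rewrite -[X in _ + X]mulr1 -mulrDr ler_wpM2l // natr1 ler_nat; lia.
Qed.

Lemma cone_sub (v x x' : X) :
  (forall u, cball d v beta u -> (d x u + d x' v = d x' u + d x v)%N) ->
  cone d x v `<=` cone d x' v.
Proof.
move=> hc y; rewrite /cone /Defs.interval /=.
move: {2}(d v y) (erefl (d v y)) => n; elim: n y => [|n IH] y hy hxy.
  by have <- := dist_eq0 hy; rewrite dist_xx addn0.
have [y1 [hvy1 hy1y]] := geodesic_step hy.
have h1 : (d x v + d v y1)%N = d x y1.
  by have := dist_triangle x y1 y; have := dist_triangle x v y1; lia.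
have h1' := IH y1 hvy1 h1.
have := dist_triangle x' v y; have := dist_triangle x' y y1; have := distC y y1.
have [//|hlt] := eqVneq (d x' v + d v y)%N (d x' y) => t1 t2 t3.
have [u [hu hvu]] := (hs x' y1 y hy1y).1 v h1'.
move: hu; rewrite /Defs.interval /= => hu.
have := hc u hvu; have := dist_triangle x u y; lia.
Qed.

Lemma finite_cones_at (hfin : bounded_finite d) (v : X) :
  finite_set (range (cone d ^~ v)).
Proof.
have [M hM] := exists_nat_ge beta.
have hBv u : cball d v beta u -> (d v u <= M)%N.
  by rewrite /cball /= => hu; rewrite -(ler_nat R); apply: le_trans hu hM.
pose profile x := [set p : X * nat | cball d v beta p.1 /\ (p.2 + d x v = d x p.1 + M)%N].
apply: (finite_range_factor (g := profile)); last first.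
  apply: (sub_finite_set _ (finite_set_subsets
    (finite_setX (finite_cball v beta hfin) (finite_II (2 * M).+1)))).
  move=> _ [x _ <-] [u k] [/= hu hk]; split => //=.
  by have := hBv u hu; have := dist_triangle x v u; lia.
move=> x x' hxx'.
have agree u : cball d v beta u -> (d x u + d x' v = d x' u + d x v)%N.
  move=> hu; have := hBv u hu; have := dist_triangle x u v; have := distC u v.
  move=> t1 t2 t3; have : profile x (u, (d x u + M - d x v)%N) by split => //=; lia.
  by rewrite hxx' => -[_ /=]; lia.
by apply/seteqP; split; apply: cone_sub => u hu; have := agree u hu; lia.
Qed.

Lemma finite_pointed_cones (hfin : bounded_finite d) (z : X) (r : R) :
  finite_set (pointed_cones d (cball d z r)).
Proof.
apply: (@sub_finite_set _ _
  (\bigcup_(v in cball d z r) ((fun C => (v, C)) @` range (cone d ^~ v)))).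
  by move=> _ [v [x [hv ->]]]; exists v => //; exists (cone d x v) => //; exists x.
apply: bigcup_finite; first exact: finite_cball.
by move=> v _; apply/finite_image/finite_cones_at.
Qed.

End Cones.

(* Equal cones at a common point [v] put [v] on [I(x,y')] and [I(x',y)], so
   [d x y' + d x' y = f x + f y + f x' + f y'] and each summand is tight. *)
Lemma Aset_exchange (R : realType) (X : Type) (d : X -> X -> nat) (f : X -> R)
  (hD : Delta d f) (x y x' y' v : X) :
  Aset d f (x, y) -> Aset d f (x', y') -> itv d x y v -> itv d x' y' v ->
  cone d x v = cone d x' v -> Aset d f (x, y') /\ Aset d f (x', y).
Proof.
rewrite /Aset /= => hxy hxy' hv hv' hc.
have : cone d x' v y by rewrite -hc.
have : cone d x v y' by rewrite hc.
rewrite /cone /Defs.interval /= in hv hv' * => h1 h2.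
have := hD x y'; have := hD x' y.
have : (d x y')%:R + (d x' y)%:R = f x + f y + (f x' + f y') :> R.
  by rewrite hxy hxy' -!natrD; congr (_%:R); lia.
by move=> e a1 a2; split; apply/eqP; rewrite eq_le; apply/andP; split => //; lra.
Qed.

Section Pairing.
Variables (R : realType) (X : Type) (d : X -> X -> nat) (A : set (X * X)).

(* If [x |-> e x] only forgets what is needed to find a partner of [x], every
   solution of the homogeneous system of [A] is constant on the fibres of [e]
   and changes sign from the fibre of [x] to that of its partner. *)
Lemma rk_ge_pairing_leq (N k : nat) (e : X -> 'I_N) (p : X -> X) :
  (forall x, A (x, p x)) -> (forall x x', e x = e x' -> A (x, p x')) ->
  @rk_ge X R d A k -> (k + k <= N)%N.
Proof.
move=> hp he [g0 [g [hg0 [hg hli]]]].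
pose h i x := g i x - g0 x.
have h_anti i x y : A (x, y) -> h i x + h i y = 0.
  by move=> hxy; have := hg0 _ hxy; have := hg i _ hxy; rewrite /h /=; lra.
have h_fibre i x x' : e x = e x' -> h i x = h i x'.
  by move=> hxx'; have := h_anti i _ _ (he _ _ hxx'); have := h_anti i _ _ (hp x'); lra.
pose U i c := if pselect (exists x, e x = c) is left ex then h i (projT1 (cid ex)) else 0.
have U_e i x : U i (e x) = h i x.
  rewrite /U; case: pselect => [ex|]; last by case; exists x.
  by case: (cid ex) => y /= /h_fibre ->.
apply: (@lin_indep_antipodal_leq R _ _ U); last first.
  move=> a ha; apply: hli => x.
  by rewrite -[RHS](ha (e x)); apply: eq_bigr => i _; rewrite U_e.
move=> c; have [[x <-]|none] := pselect (exists x, e x = c).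
  by right; exists (e (p x)) => i; rewrite !U_e; have := h_anti i _ _ (hp x); lra.
by left => i; rewrite /U; case: pselect.
Qed.

End Pairing.

Section RigidPairs.
Variables (R : realType) (X : Type) (d : X -> X -> nat).

(* [f + sg (g - f)] also solves the system of [A(g)]; rank one forces
   [sg (g - f)] to be proportional to [g - f]. *)
Lemma Aset_sub_rk1_values (f g : X -> R) :
  Aset d g `<=` Aset d f -> ~ @rk_ge X R d (Aset d f) 1 -> @rk_eq X R d (Aset d g) 1 ->
  exists2 c : R, 0 < c & forall x, g x - f x = 0 \/ g x - f x = c \/ g x - f x = - c.
Proof.
move=> hsub hf0 [hg1 hg2]; pose del x := g x - f x.
have del_anti x y : Aset d g (x, y) -> del x + del y = 0.
  by move=> hxy; have := hsub _ hxy; move: hxy; rewrite /Aset /del /=; lra.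
have [x1 hx1] : exists x1, del x1 != 0.
  apply: contrapT => hn; apply: hf0; suff -> : f = g by [].
  apply/funext => x; apply/eqP; rewrite eq_sym -subr_eq0.
  by apply/negPn/negP => h; apply: hn; exists x.
have sol_f : @solset X R d (Aset d g) f by move=> p /hsub.
have sol_g : @solset X R d (Aset d g) g by [].
have sol_sg : @solset X R d (Aset d g) (fun x => f x + Num.sg (del x)).
  move=> [x y] hxy /=; have := sol_f _ hxy; have := del_anti _ _ hxy => e1 e2.
  have -> : Num.sg (del y) = - Num.sg (del x) by rewrite -sgrN; congr Num.sg; lra.
  lra.
have [a [b [ab0 hab]]] := not_affdim_ge2_dependent hg2 sol_f sol_g sol_sg.
have {}hab x : a * del x + b * Num.sg (del x) = 0 by have := hab x; rewrite addrAC subrr add0r.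
have b0 : b != 0.
  apply/eqP => b0; have := hab x1; rewrite b0 mul0r addr0 => /eqP.
  rewrite mulf_eq0 (negbTE hx1) orbF => /eqP a0.
  by case: ab0; rewrite ?a0 ?b0 eqxx.
pose mu := - (a / b).
have sg_del x : Num.sg (del x) = mu * del x.
  apply: (mulfI b0); have -> : b * (mu * del x) = - (a * del x) by rewrite /mu; field.
  by have := hab x; lra.
have mu0 : mu != 0.
  apply: contraNneq hx1 => mu0.
  by have := sg_del x1; rewrite mu0 mul0r => /eqP; rewrite sgr_eq0.
exists `|mu|^-1; first by rewrite invr_gt0 normr_gt0.
move=> x; rewrite -/(del x); have [->|dx] := eqVneq (del x) 0; first by left.
have : `|del x| = `|mu|^-1.
  have nmu : `|mu| != 0 by rewrite normr_eq0.
  by apply: (mulfI nmu); rewrite mulfV // -normrM -sg_del normr_sg dx.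
by move/eqP; rewrite eqr_norml => /andP[/orP[/eqP|/eqP] ? _]; [right; left | right; right].
Qed.

Definition Aset_partners (f : X -> R) (K : set X) : set X :=
  [set x | exists2 y, K y & Aset d f (x, y)].

(* The pairs of [A(f)] that are tight for [f + c (1_{K'} - 1_K)], [K'] being the
   set of partners of [K]. *)
Definition Aset_restrict (f : X -> R) (K : set X) : set (X * X) :=
  let K' := Aset_partners f K in
  [set p | Aset d f p /\
    ((K p.1 /\ K' p.2) \/ (K' p.1 /\ K p.2) \/ (~ (K p.1 \/ K' p.1) /\ ~ (K p.2 \/ K' p.2)))].

Lemma Aset_sub_rk1_eq (f g : X -> R) :
  Eprime d g -> Aset d g `<=` Aset d f ->
  ~ @rk_ge X R d (Aset d f) 1 -> @rk_eq X R d (Aset d g) 1 ->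
  Aset d g = Aset_restrict f [set x | g x < f x].
Proof.
move=> [hgD hgE] hsub hf0 hg1; have [c c0 hv] := Aset_sub_rk1_values hsub hf0 hg1.
have eK : [set x | g x < f x] = [set x | g x - f x = - c].
  by apply/seteqP; split => x /=; case: (hv x) => [|[|]]; lra.
have eK' : Aset_partners f [set x | g x < f x] = [set x | g x - f x = c].
  rewrite eK; apply/seteqP; split => x /=.
    move=> [y /= hy hxy]; have := hgD x y; move: hxy; rewrite /Aset /=.
    by case: (hv x) => [|[|]]; lra.
  move=> hx; have [y hy] := hgE x; exists y; last exact: hsub.
  by have := hsub _ hy; move: hy; rewrite /Aset /= => e1 e2; lra.
rewrite /Aset_restrict eK' eK; apply/seteqP; split => -[x y] /=.
  move=> hxy; split; first exact: hsub.
  have := hsub _ hxy; move: hxy; rewrite /Aset /= => e1 e2.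
  case: (hv x) => [a|[a|a]]; case: (hv y) => [b|[b|b]]; try (exfalso; lra).
  - by right; right; split; case; lra.
  - by right; left; split; lra.
  - by left; split; lra.
move=> [hxy hh]; move: hxy; rewrite /Aset /= => hxy.
case: hh => [[h1 h2]|[[h1 h2]|[h1 h2]]]; try lra.
by case: (hv x) => [a|[a|a]]; case: (hv y) => [b|[b|b]]; try lra; exfalso; tauto.
Qed.

End RigidPairs.

Lemma rk_ge_singleton (R : realType) (X : Type) (d : X -> X -> nat) (A : set (X * X))
  (z : X) (k : nat) : (forall x, x = z) -> A (z, z) -> ~ @rk_ge X R d A k.+1.
Proof.
move=> single hA [g0 [g [hg0 [hg hli]]]].
have h0 i x : g i x - g0 x = 0.
  by rewrite (single x); have := hg0 _ hA; have := hg i _ hA; rewrite /=; lra.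
suff /eqP : (1 : R) = 0 by rewrite oner_eq0.
apply: (hli (fun _ => 1) _ ord0) => x.
by apply: big1 => i _; rewrite h0 mulr0.
Qed.

Section ConeEncoding.
Variables (R : realType) (X : Type) (d : X -> X -> nat) (beta : R).
Hypotheses (hm : is_int_metric d) (hg : discretely_geodesic d).
Hypotheses (hs : stable_intervals d beta) (hb : 0 <= beta).
Variables (z : X) (alpha : R).
Let B := cball d z (2 * alpha * beta).

Lemma Aset_interval_meets_ball (f : X -> R) (hD : Delta d f) (hfz : f z <= alpha) x y :
  Aset d f (x, y) -> exists v, itv d x y v /\ B v.
Proof.
rewrite /Aset /= => hxy.
have [v [hv hvb]] := interval_near_center hm hg hs z x y hb.
exists v; split => //; apply: le_trans hvb _.
have := dist_triangle hm x z y => t.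
rewrite natrB // natrD -hxy [_ * beta]mulrC ler_wpM2l //.
by have := hD x z; have := hD z y; lra.
Qed.

Variable N : nat.
Hypothesis hN : (pointed_cones d B #= `I_N)%card.

(* [e x] records a point [v] of [I(x,y) \cap B] for a partner [y] of [x],
   together with the cone [C(x,v)]. *)
Lemma Aset_cone_pairing (f : X -> R) (hf : Eprime d f) (hfz : f z <= alpha) :
  exists (e : X -> 'I_N) (p : X -> X),
    (forall x, Aset d f (x, p x)) /\ (forall x x', e x = e x' -> Aset d f (x, p x')).
Proof.
case: hf => hD hE; have [enc [hfun hinj _]] := card_set_bijP hN.
have partner x : exists q : X * X, Aset d f (x, q.1) /\ itv d x q.1 q.2 /\ B q.2.
  have [y hy] := hE x; have [v [hv hB]] := Aset_interval_meets_ball hD hfz hy.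
  by exists (y, v).
have [P hP] := choice partner.
pose phi x := ((P x).2, cone d x (P x).2).
have hphi x : pointed_cones d B (phi x) by exists (P x).2, x; have [_ []] := hP x.
exists (fun x => Ordinal (hfun _ (hphi x))), (fun x => (P x).1).
split => [x|x x' /(congr1 val) /= hxx']; first exact: (hP x).1.
have [ev hc] := hinj _ _ (mem_set (hphi x)) (mem_set (hphi x')) hxx'.
have [hx [ix _]] := hP x; have [hx' [ix' _]] := hP x'; rewrite -ev in ix' hc.
exact: (Aset_exchange hD hx hx' ix ix' hc).1.
Qed.

Lemma rk_ge_Aset_leq (f : X -> R) (hf : Eprime d f) (hfz : f z <= alpha) (k : nat) :
  @rk_ge X R d (Aset d f) k -> (k + k <= N)%N.
Proof.
have [e [p [hp he]]] := Aset_cone_pairing hf hfz.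
exact: rk_ge_pairing_leq hp he.
Qed.

Definition Aset_cones (f : X -> R) (x : X) : set (X * set X) :=
  [set p | exists y v, [/\ Aset d f (x, y), itv d x y v, B v & p = (v, cone d x v)]].

Definition Aset_cones_of (f : X -> R) (K : set X) : set (X * set X) :=
  [set p | exists2 x, K x & Aset_cones f x p].

Lemma Aset_cones_of_sub (f : X -> R) (K : set X) : Aset_cones_of f K `<=` pointed_cones d B.
Proof. by move=> p [x _ [y [v [_ _ hv ->]]]]; exists v, x. Qed.

(* A cone of [x'] shared with some [x] in [K] produces, by exchange, a pair
   [{x,w}] of [A(f)] with [w] a partner of [x'] for [g]; this forces [g x' < f x']. *)
Lemma Aset_cones_sub_lt (f g : X -> R) (hfD : Delta d f) (hfz : f z <= alpha) :
  Eprime d g -> Aset d g `<=` Aset d f ->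
  forall x', Aset_cones f x' `<=` Aset_cones_of f [set x | g x < f x] -> g x' < f x'.
Proof.
move=> [hgD hgE] hsub x' hx'; have [w hw] := hgE x'; have hw' := hsub _ hw.
have [v [hv hB]] := Aset_interval_meets_ball hfD hfz hw'.
have [|x /= hx [y [v2 [hxy hv2 _ [ev hc]]]]] := hx' (v, cone d x' v); first by exists w, v.
rewrite -ev in hv2 hc.
have [hxw _] := Aset_exchange hfD hxy hw' hv2 hv (esym hc).
by have := hgD x w; move: hw hw' hxw; rewrite /Aset /=; lra.
Qed.

Lemma card_rk1_subsets_leq (f : X -> R) (hf : Eprime d f) (hfz : f z <= alpha)
  (hf0 : @rk_eq X R d (Aset d f) 0) (n : nat) (F : 'I_n -> set (X * X)) :
  injective F ->
  (forall i, @scriptA X R d (F i) /\ F i `<=` Aset d f /\ @rk_eq X R d (F i) 1) ->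
  (n <= 2 ^ N)%N.
Proof.
case: hf => hfD _ hFi hF.
have [G hG] := choice (fun i => (hF i).1).
have hGi i : [/\ Eprime d (G i), Aset d (G i) `<=` Aset d f & @rk_eq X R d (Aset d (G i)) 1].
  by have [hE <-] := hG i; have [_ [hsub hr]] := hF i.
pose K i := [set x | G i x < f x].
apply: (leq_exp2_injective_subsets hN (S := fun i => Aset_cones_of f (K i))).
  by move=> i; apply: Aset_cones_of_sub.
have sub_K i j : Aset_cones_of f (K i) = Aset_cones_of f (K j) -> K i `<=` K j.
  have [hEj hsubj _] := hGi j.
  move=> hij x hx; apply: (Aset_cones_sub_lt hfD hfz hEj hsubj) => p hp.
  by rewrite -hij; exists x.
move=> i j hij; apply: hFi; rewrite (hG i).2 (hG j).2.
have [hEi hsubi hri] := hGi i; have [hEj hsubj hrj] := hGi j.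
rewrite (Aset_sub_rk1_eq hEi hsubi hf0.2 hri) (Aset_sub_rk1_eq hEj hsubj hf0.2 hrj).
by congr Aset_restrict; apply/seteqP; split; apply: sub_K.
Qed.

End ConeEncoding.

Theorem proposition5p12 (R : realType) (X : Type) (d : X -> X -> nat) (beta : R)
  (hmet : is_int_metric d) (hgeo : discretely_geodesic d)
  (hstab : stable_intervals d beta) (hfin : bounded_finite d)
  (z : X) (alpha : R) (halpha : 0 < alpha) :
  let B := cball d z (2 * alpha * beta) in
  exists N : nat, (pointed_cones d B #= `I_N)%card /\
    (forall f : X -> R, Eprime d f -> f z <= alpha ->
       forall k : nat, @rk_ge X R d (Aset d f) k -> (k%:R : R) <= N%:R / 2) /\
    (forall f : X -> R, Eprime d f -> f z <= alpha -> @rk_eq X R d (Aset d f) 0 ->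
       forall (n : nat) (F : 'I_n -> set (X * X)), injective F ->
       (forall i, @scriptA X R d (F i) /\ F i `<=` Aset d f /\ @rk_eq X R d (F i) 1) ->
       (n <= 2 ^ N)%N).
Proof.
move=> B; have [N hN] := finite_pointed_cones hmet hgeo hstab hfin z (2 * alpha * beta).
exists N; split => //.
have [hb|hb] := leP 0 beta.
  split=> [f hf hfz k hk|f hf hfz hf0 n F].
    have := rk_ge_Aset_leq hmet hgeo hstab hb hN hf hfz hk.
    by rewrite ler_pdivlMr // -natrM ler_nat; lia.
  exact: (card_rk1_subsets_leq hmet hgeo hstab hb hN hf hfz hf0 (n := n) (F := F)).
have single := stable_intervals_neg_singleton hmet hgeo hstab hb z.
have diag (g : X -> R) : Eprime d g -> Aset d g (z, z).
  by case=> _ /(_ z) [y]; rewrite (single y).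
split=> [f hf _ [|k] hk|f hf _ _ [|n] F _ hF //]; first by rewrite divr_ge0.
  by case: (rk_ge_singleton single (diag f hf) hk).
have [[g [hg ->]] [_ [hr _]]] := hF ord0.
by case: (rk_ge_singleton single (diag g hg) hr).
Qed.
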